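(* Let $g\geqslant0$ be even and $i\geqslant0$ an integer. Then: (i) there exists $w_{g,i}\in\mathbb{C}[\alpha,\gamma]$, a unit modulo $J_g^+$, such that $w_{g,i}\gamma^i\zeta^+_{g-2i-1}\equiv\gamma^{i+1}\zeta^+_{g-2i-2}\pmod{J_g^+}$; (ii) there exists $x_{g,i}\in\mathbb{C}[\alpha,\gamma]$, a unit modulo $J_g^+$, such that $\alpha\, x_{g,i}\gamma^i\zeta^+_{g-2i-1}\equiv\gamma^{i+1}\zeta^+_{g-2i-3}\pmod{J_g^+}$ if $i$ is even, and $x_{g,i}\gamma^i\zeta^+_{g-2i-1}\equiv\alpha\,\gamma^{i+1}\zeta^+_{g-2i-3}\pmod{J_g^+}$ if $i$ is odd.
   Context: $\zeta_k^+\in\mathbb{C}[\alpha,\gamma]$: $\zeta^+_i=0$ for $i<0$, $\zeta^+_0=1$, $\zeta^+_{k+1}=\alpha\zeta^+_k+16k^2\zeta^+_{k-1}+2k(k-1)\gamma\zeta^+_{k-2}$ for $k$ even and $\zeta^+_{k+1}=\alpha\zeta^+_k+2k(k-1)\gamma\zeta^+_{k-2}$ for $k$ odd ($k\geqslant0$); $J^+_k=(\zeta^+_k,\zeta^+_{k+1},\zeta^+_{k+2})$. A unit modulo $J$ is an element whose image in $\mathbb{C}[\alpha,\gamma]/J$ is invertible. *)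

From HB Require Import structures.
From mathcomp Require Import all_boot all_order all_algebra.
From mathcomp Require Import complex.
From mathcomp Require Import reals.
Set Implicit Arguments. Unset Strict Implicit. Unset Printing Implicit Defensive.
Import Order.TTheory GRing.Theory Num.Theory.
Local Open Scope ring_scope.

(* C[alpha, gamma] is modelled as {poly {poly C}}: the outer variable is
   alpha, the inner one is gamma. *)
Section Zeta.
Variable C : comNzRingType.

Definition alpha : {poly {poly C}} := 'X.
Definition gamma : {poly {poly C}} := ('X)%:P.

(* zeta3 k = (zeta_k, zeta_{k-1}, zeta_{k-2}), with zeta_i = 0 for i < 0. *)
Fixpoint zeta3 (k : nat) : {poly {poly C}} * {poly {poly C}} * {poly {poly C}} :=
  match k with
  | 0 => (1, 0, 0)
  | k'.+1 =>
      let: (a, b, c) := zeta3 k' in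
      (alpha * a
       + (if ~~ odd k' then (16 * k' ^ 2)%N%:R * b else 0)
       + (2 * k' * k'.-1)%N%:R * gamma * c, a, b)
  end.

Definition zeta (k : nat) : {poly {poly C}} := (zeta3 k).1.1.

Definition zetaZ (k : int) : {poly {poly C}} :=
  match k with Posz n => zeta n | Negz _ => 0 end.

Definition congrJ (g : nat) (p q : {poly {poly C}}) : Prop :=
  exists a b c : {poly {poly C}},
    p - q = a * zeta g + b * zeta g.+1 + c * zeta g.+2.

Definition unitJ (g : nat) (w : {poly {poly C}}) : Prop :=
  exists u : {poly {poly C}}, congrJ g (u * w) 1.
End Zeta.

From mathcomp Require Import all_boot all_order all_algebra.
From mathcomp Require Import complex.
From mathcomp Require Import reals.
From mathcomp Require Import ring zify.
Set Implicit Arguments. Unset Strict Implicit. Unset Printing Implicit Defensive.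
Import Order.TTheory GRing.Theory Num.Theory.
Local Open Scope ring_scope.

(* Write g = 2G and Z = ζ_{2G-1}.  Modulo J, the recurrence at 2G+1 gives
   γ Z ≡ 0, and running the recurrence downwards, each step solved for its
   γ-term, gives γ^d ζ_{2(G-d)} ≡ A_d(α) Z and γ^d ζ_{2(G-d)-1} ≡ B_d(α) Z for
   explicit polynomials A_d, B_d.  At the bottom γ^G ≡ A_G(α) Z, while
   α γ^G = γ · γ^{G-1} ζ_1 ≡ γ B_{G-1}(α) Z ≡ 0, so α A_G(α) Z ≡ 0.  Modulo γ
   the recurrence gives Z ≡ α Q(α) with Q = ∏_{0<j<G} (α² + 64 j²), and
   Z² ≡ 0, so α Q(α) Z ≡ 0.  A sign invariant of the descent at purely
   imaginary points shows that A_G does not vanish at the roots of Q; by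
   Bezout α Z ≡ 0, hence p(α) Z ≡ p(0) Z for every p.  The constant terms of
   A_d (d even) and B_d (d odd) vanish, which yields both congruences with
   constant units. *)

Definition zeta_coef1 (k : nat) : nat := 16 * k ^ 2.
Definition zeta_coef2 (k : nat) : nat := 2 * k * k.-1.

Lemma zeta_coef1_gt0 k : (0 < k)%N -> (0 < zeta_coef1 k)%N.
Proof. by rewrite /zeta_coef1 muln_gt0 expn_gt0 => ->. Qed.

Lemma zeta_coef2_gt0 k : (1 < k)%N -> (0 < zeta_coef2 k)%N.
Proof. by rewrite /zeta_coef2 !muln_gt0 /=; lia. Qed.

Section IdealJ.
Variable C : comNzRingType.
Local Notation P := {poly {poly C}}.
Local Notation α := (alpha C).
Local Notation γ := (gamma C).
Local Notation z := (zeta C).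
Implicit Types (g : nat) (p q : P).

Definition inJ g p := congrJ g p 0.

Lemma congrJE g p q : congrJ g p q <-> inJ g (p - q).
Proof. by rewrite /inJ /congrJ subr0. Qed.

Lemma congrJ_refl g p : congrJ g p p.
Proof. by exists 0, 0, 0; rewrite subrr !mul0r !addr0. Qed.

Lemma inJD g p q : inJ g p -> inJ g q -> inJ g (p + q).
Proof.
rewrite /inJ /congrJ !subr0 => -[a [b [c ->]]] [a' [b' [c' ->]]].
by exists (a + a'), (b + b'), (c + c'); ring.
Qed.

Lemma inJMl g m p : inJ g p -> inJ g (m * p).
Proof.
rewrite /inJ /congrJ !subr0 => -[a [b [c ->]]].
by exists (m * a), (m * b), (m * c); ring.
Qed.

Lemma inJN g p : inJ g p -> inJ g (- p).
Proof. by rewrite -mulN1r; apply: inJMl. Qed.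

Lemma inJB g p q : inJ g p -> inJ g q -> inJ g (p - q).
Proof. by move=> hp /inJN; apply: inJD. Qed.

Lemma inJ_zeta g : inJ g (z g).
Proof. by exists 1, 0, 0; rewrite subr0; ring. Qed.

Lemma inJ_zetaS g : inJ g (z g.+1).
Proof. by exists 0, 1, 0; rewrite subr0; ring. Qed.

Lemma inJ_zetaSS g : inJ g (z g.+2).
Proof. by exists 0, 0, 1; rewrite subr0; ring. Qed.

Lemma inJ_mul_congr g m Y Z q :
  inJ g (m * Z) -> congrJ g Y (q * Z) -> inJ g (m * Y).
Proof.
move=> mZ /congrJE YqZ.
have -> : m * Y = m * (Y - q * Z) + q * (m * Z) by ring.
by apply: inJD; apply: inJMl.
Qed.

Lemma zeta3S k : zeta3 C k.+1 =
  (α * (zeta3 C k).1.1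
   + (if ~~ odd k then (zeta_coef1 k)%:R * (zeta3 C k).1.2 else 0)
   + (zeta_coef2 k)%:R * γ * (zeta3 C k).2, (zeta3 C k).1.1, (zeta3 C k).1.2).
Proof. by rewrite /=; case: (zeta3 C k) => [[a b] c]. Qed.

Lemma zetaS k : z k.+1 = α * z k
   + (if ~~ odd k then (zeta_coef1 k)%:R * z k.-1 else 0)
   + (zeta_coef2 k)%:R * γ * z k.-2.
Proof.
case: k => [|[|k]]; last by rewrite /zeta !zeta3S.
- by rewrite /zeta /= !mul0r !addr0.
- by rewrite /zeta /= !mul0r !addr0.
Qed.

Lemma zetaS_even k : ~~ odd k ->
  z k.+1 = α * z k + (zeta_coef1 k)%:R * z k.-1 + (zeta_coef2 k)%:R * γ * z k.-2.
Proof. by move=> ek; rewrite zetaS ek. Qed.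

Lemma zetaS_odd k : odd k -> z k.+1 = α * z k + (zeta_coef2 k)%:R * γ * z k.-2.
Proof. by move=> ok; rewrite zetaS ok addr0. Qed.

Lemma zeta0 : z 0 = 1.
Proof. by []. Qed.

Lemma zeta1 : z 1 = α.
Proof. by rewrite /zeta /= !mul0r !addr0 mulr1. Qed.

Lemma map_polyC_X : ('X : {poly C})^:P = α.
Proof. exact: map_polyX. Qed.

Definition Qpoly (m : nat) : {poly C} := \prod_(1 <= j < m.+1) ('X^2 + (8 * j)%:R ^+ 2).

Lemma zeta_mod_gamma m : exists r s : P,
  z (2 * m).+1 = ('X * Qpoly m)^:P + γ * r /\
  z (2 * m).+2 = ('X^2 * Qpoly m)^:P + γ * s.
Proof.
elim: m => [|m [r [s [zr zs]]]].
  exists 0, 0; rewrite /Qpoly big_geq // muln0 !mulr1 mulr0 !addr0 rmorphXn /= map_polyC_X.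
  split; first exact: zeta1.
  by rewrite zetaS_odd // zeta1 (_ : zeta_coef2 1 = 0%N) // !mul0r addr0 expr2.
have QS : Qpoly m.+1 = Qpoly m * ('X^2 + (8 * m.+1)%:R ^+ 2) by rewrite /Qpoly big_nat_recr.
have c1 : (zeta_coef1 (2 * m).+2)%:R = (8 * m.+1)%:R ^+ 2 :> P.
  by rewrite -natrX /zeta_coef1; congr _%:R; nia.
have [r' zr'] : exists r', z (2 * m).+3 = ('X * Qpoly m.+1)^:P + γ * r'.
  exists (α * s + (zeta_coef1 (2 * m).+2)%:R * r + (zeta_coef2 (2 * m).+2)%:R * z (2 * m)).
  rewrite zetaS_even /= ?oddM // zs zr c1 QS.
  by rewrite !(rmorphM, rmorphD, rmorphXn, rmorph_nat) /= map_polyC_X; ring.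
exists r', (α * r' + (zeta_coef2 (2 * m).+3)%:R * z (2 * m).+1).
rewrite (_ : (2 * m.+1)%N = (2 * m).+2); last by lia.
split => //; rewrite zetaS_odd /= ?oddM // zr' !(rmorphM, rmorphXn) /= map_polyC_X; ring.
Qed.

End IdealJ.

Section Coefficients.
Variable C : fieldType.
Implicit Types (AB : {poly C} * {poly C}) (x : C).

(* The recurrence at k (resp. k - 1) solved for its γ-term.  For k = 2 the
   second component divides by zeta_coef2 1 = 0 and is junk; it is never used. *)
Definition zcoef_step (k : nat) AB : {poly C} * {poly C} :=
  (- ((zeta_coef2 k)%:R^-1 *: ('X * AB.1 + (zeta_coef1 k)%:R * AB.2)),
   (zeta_coef2 k.-1)%:R^-1 *: (AB.1 - 'X * AB.2)).

Definition zcoef (G d : nat) : {poly C} * {poly C} :=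
  iteri d (fun j => zcoef_step (2 * (G - j))) (0, 1).

Lemma zcoefS G d : zcoef G d.+1 = zcoef_step (2 * (G - d)) (zcoef G d).
Proof. by []. Qed.

Lemma zcoef_last G : (0 < G)%N -> zcoef G G = zcoef_step 2 (zcoef G G.-1).
Proof. by move=> G0; rewrite -{2}(prednK G0) zcoefS; congr zcoef_step; lia. Qed.

Lemma zcoef_step_horner k AB x :
  (zcoef_step k AB).1.[x] =
    - ((zeta_coef2 k)%:R^-1 * (x * AB.1.[x] + (zeta_coef1 k)%:R * AB.2.[x])) /\
  (zcoef_step k AB).2.[x] = (zeta_coef2 k.-1)%:R^-1 * (AB.1.[x] - x * AB.2.[x]).
Proof. by rewrite /= -polyC_natr !hornerE. Qed.

Lemma zcoef_horner0 G d : (if odd d then (zcoef G d).2 else (zcoef G d).1).[0] = 0.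
Proof.
elim: d => [|d IH]; first by rewrite hornerC.
rewrite zcoefS oddS; have [h1 h2] := zcoef_step_horner (2 * (G - d)) (zcoef G d) 0.
by case: (odd d) IH => /= IH; rewrite ?h1 ?h2 IH !(mul0r, mulr0, addr0, subr0, oppr0).
Qed.

End Coefficients.

Section Descent.
Variable C : numFieldType.
Local Notation P := {poly {poly C}}.
Local Notation α := (alpha C).
Local Notation γ := (gamma C).
Local Notation z := (zeta C).
Local Notation zcoef := (@zcoef C).
Local Notation zcoef_step := (@zcoef_step C).
Implicit Types (AB : {poly C} * {poly C}) (p : P).

Lemma inJ_natrMl g n p : n != 0%N -> inJ g (n%:R * p) -> inJ g p.
Proof.
move=> n0 /(inJMl ((n%:R : C)^-1)%:P%:P).
by rewrite mulrA -!polyC_natr -!polyCM mulVf ?pnatr_eq0 // mul1r.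
Qed.

Lemma zcoef_step1 k AB : (1 < k)%N ->
  (zeta_coef2 k)%:R * (zcoef_step k AB).1^:P = - (α * AB.1^:P + (zeta_coef1 k)%:R * AB.2^:P).
Proof.
move=> k1; rewrite -(rmorph_nat (map_poly polyC)) -rmorphM /= mulrN.
rewrite -[(zeta_coef2 k)%:R]polyC_natr mul_polyC scalerA mulfV ?scale1r; last first.
  by rewrite pnatr_eq0 -lt0n zeta_coef2_gt0.
by rewrite !(rmorphN, rmorphD, rmorphM, rmorph_nat) /= map_polyC_X.
Qed.

Lemma zcoef_step2 k AB : (2 < k)%N ->
  (zeta_coef2 k.-1)%:R * (zcoef_step k AB).2^:P = AB.1^:P - α * AB.2^:P.
Proof.
move=> k2; rewrite -(rmorph_nat (map_poly polyC)) -rmorphM /=.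
rewrite -[(zeta_coef2 k.-1)%:R]polyC_natr mul_polyC scalerA mulfV ?scale1r; last first.
  by rewrite pnatr_eq0 -lt0n zeta_coef2_gt0 //; lia.
by rewrite !(rmorphB, rmorphM) /= map_polyC_X.
Qed.

Variable G : nat.
Hypothesis G_gt0 : (0 < G)%N.
Local Notation g := (2 * G)%N.
Local Notation Z := (z g.-1).

Lemma inJ_gammaZ : inJ g (γ * Z).
Proof.
apply: (@inJ_natrMl _ (zeta_coef2 g.+1)); first by rewrite -lt0n zeta_coef2_gt0 //; lia.
have -> : (zeta_coef2 g.+1)%:R * (γ * Z) = z g.+2 - α * z g.+1.
  by rewrite (@zetaS_odd _ g.+1) /= ?oddM //; ring.
by apply: inJB; [exact: inJ_zetaSS | apply: inJMl; exact: inJ_zetaS].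
Qed.

Lemma descent_step_even d k AB : ~~ odd k ->
  congrJ g (γ ^+ d * z k.+2) (AB.1^:P * Z) ->
  congrJ g (γ ^+ d * z k.+1) (AB.2^:P * Z) ->
  inJ g (γ ^+ d * z k.+3) ->
  congrJ g (γ ^+ d.+1 * z k) ((zcoef_step k.+2 AB).1^:P * Z).
Proof.
move=> ek /congrJE hA /congrJE hB h3; apply/congrJE.
apply: (@inJ_natrMl _ (zeta_coef2 k.+2)); first by rewrite -lt0n zeta_coef2_gt0.
rewrite mulrBr [_%:R * (_ * Z)]mulrA zcoef_step1 //.
have -> : (zeta_coef2 k.+2)%:R * (γ ^+ d.+1 * z k)
          - - (α * AB.1^:P + (zeta_coef1 k.+2)%:R * AB.2^:P) * Z
        = γ ^+ d * z k.+3 - α * (γ ^+ d * z k.+2 - AB.1^:P * Z)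
          - (zeta_coef1 k.+2)%:R * (γ ^+ d * z k.+1 - AB.2^:P * Z).
  by rewrite (@zetaS_even _ k.+2) /= ?negbK // exprS; ring.
by apply: inJB; [apply: inJB => //|]; apply: inJMl.
Qed.

Lemma descent_step_odd d k AB : ~~ odd k -> (0 < k)%N ->
  congrJ g (γ ^+ d * z k.+2) (AB.1^:P * Z) ->
  congrJ g (γ ^+ d * z k.+1) (AB.2^:P * Z) ->
  congrJ g (γ ^+ d.+1 * z k.-1) ((zcoef_step k.+2 AB).2^:P * Z).
Proof.
move=> ek k0 /congrJE hA /congrJE hB; apply/congrJE.
apply: (@inJ_natrMl _ (zeta_coef2 k.+1)); first by rewrite -lt0n zeta_coef2_gt0.
rewrite mulrBr [_%:R * (_ * Z)]mulrA (zcoef_step2 _ (_ : 2 < k.+2)%N) //.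
have -> : (zeta_coef2 k.+1)%:R * (γ ^+ d.+1 * z k.-1) - (AB.1^:P - α * AB.2^:P) * Z
        = (γ ^+ d * z k.+2 - AB.1^:P * Z) - α * (γ ^+ d * z k.+1 - AB.2^:P * Z).
  by rewrite (@zetaS_odd _ k.+1) /= ?ek // exprS; ring.
by apply: inJB => //; apply: inJMl.
Qed.

Lemma descent d e : (d + e.+1)%N = G ->
  [/\ congrJ g (γ ^+ d * z (2 * e).+2) ((zcoef G d).1^:P * Z),
      congrJ g (γ ^+ d * z (2 * e).+1) ((zcoef G d).2^:P * Z) &
      inJ g (γ ^+ d * z (2 * e).+3)].
Proof.
elim: d e => [|d IH] e hde.
  have [-> ->] : (2 * e).+2 = g /\ (2 * e).+1 = g.-1 by split; lia.
  rewrite expr0 !mul1r /= rmorph0 rmorph1 mul0r mul1r.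
  split; [apply/congrJE; rewrite subr0; exact: inJ_zeta | exact: congrJ_refl | exact: inJ_zetaS].
have [hA hB h3] := IH e.+1 ltac:(lia).
have e2 : (2 * e.+1)%N = (2 * e).+2 by lia.
have ek : ~~ odd (2 * e).+2 by rewrite /= oddM.
rewrite e2 in hA hB h3.
rewrite zcoefS (_ : (2 * (G - d))%N = (2 * e).+4); last by lia.
split; [exact: descent_step_even | exact: (descent_step_odd (k := (2 * e).+2)) | ].
by rewrite exprS -mulrA; apply: inJ_mul_congr inJ_gammaZ hB.
Qed.

Lemma gamma_exp_congr : congrJ g (γ ^+ G) ((zcoef G G).1^:P * Z).
Proof.
have [hA hB h3] := descent (d := G.-1) (e := 0) ltac:(lia).
rewrite muln0 in hA hB h3.
by have := descent_step_even (isT : ~~ odd 0) hA hB h3; rewrite prednK // zeta0 mulr1 -zcoef_last.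
Qed.

Lemma inJ_Zsq : inJ g (Z * Z).
Proof.
apply: (@inJ_natrMl _ (zeta_coef1 g)); first by rewrite -lt0n zeta_coef1_gt0 //; lia.
have -> : (zeta_coef1 g)%:R * (Z * Z)
        = Z * z g.+1 - α * Z * z g - (zeta_coef2 g)%:R * z g.-2 * (γ * Z).
  by rewrite (@zetaS_even _ g) ?oddM //; ring.
apply: inJB; first by apply: inJB; apply: inJMl; [exact: inJ_zetaS | exact: inJ_zeta].
by apply: inJMl; exact: inJ_gammaZ.
Qed.

Lemma inJ_alpha_zcoefZ : inJ g (α * ((zcoef G G).1^:P * Z)).
Proof.
have [_ hB _] := descent (d := G.-1) (e := 0) ltac:(lia).
have hγ := inJ_mul_congr inJ_gammaZ hB.
rewrite muln0 zeta1 in hγ.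
have /congrJE hG := gamma_exp_congr.
have eG : γ ^+ G = γ * γ ^+ G.-1 by rewrite -exprS prednK.
have -> : α * ((zcoef G G).1^:P * Z)
        = γ * (γ ^+ G.-1 * α) - α * (γ ^+ G - (zcoef G G).1^:P * Z) by rewrite eG; ring.
by apply: inJB => //; apply: inJMl.
Qed.

Lemma inJ_XQpolyZ : inJ g (('X * Qpoly C G.-1)^:P * Z).
Proof.
have [r [_ [zr _]]] := zeta_mod_gamma C G.-1.
rewrite (_ : (2 * G.-1).+1 = g.-1) in zr; last by lia.
have -> : ('X * Qpoly C G.-1)^:P * Z = Z * Z - r * (γ * Z) by rewrite {2}zr; ring.
by apply: inJB; [exact: inJ_Zsq | apply: inJMl; exact: inJ_gammaZ].
Qed.

End Descent.

Section SignPattern.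
Variable R : numDomainType.
Implicit Types a s x y A B n : R.

(* [a] will be a root of [Qpoly], so [a * a < 0]. *)
Definition sign_pattern a (d : nat) A B : Prop :=
  exists s x y, s != 0 /\
    if odd d then [/\ A = s * x, B = s * a * y, x < 0 & y < 0]
    else [/\ A = s * a * x, B = s * y, x <= 0 & 0 < y].

Lemma sign_pattern_step a c1 c2 n d A B :
  a * a < 0 -> 0 < c1 -> 0 < c2 -> 0 < n -> sign_pattern a d A B ->
  sign_pattern a d.+1 (- (c1 * (a * A + n * B))) (c2 * (A - a * B)).
Proof.
move=> aa c1_gt0 c2_gt0 n_gt0 [s [x [y [s0]]]]; rewrite /sign_pattern oddS.
case: (odd d) => /= -[-> -> hx hy].
  have hsum : x + n * y < 0 by apply: ltr_nwDl hx _; rewrite ltW // pmulr_rlt0.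
  have hdiff : x - a * a * y < 0.
    by apply: ltr_nwDl hx _; rewrite oppr_le0 ltW // nmulr_rgt0.
  exists (- s), (c1 * (x + n * y)), (- (c2 * (x - a * a * y))).
  rewrite oppr_eq0 s0 oppr_gt0 pmulr_rlt0 //; split => //.
  by split; [ring | ring | rewrite ltW // pmulr_rlt0 |].
have hsum : 0 < a * a * x + n * y.
  by apply: ltr_wpDl; [exact: mulr_le0 (ltW aa) hx | rewrite pmulr_rgt0].
exists s, (- (c1 * (a * a * x + n * y))), (c2 * (x - y)); split => //.
split; [ring | ring | by rewrite oppr_lt0 pmulr_rgt0 |].
by rewrite pmulr_rlt0 // subr_lt0 (le_lt_trans hx hy).
Qed.

Lemma sign_pattern_neq0 a n d A B :
  a * a < 0 -> 0 < n -> sign_pattern a d A B -> a * A + n * B != 0.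
Proof.
move=> aa n_gt0 [s [x [y [s0]]]].
have a0 : a != 0 by apply: contraTneq aa => ->; rewrite mul0r ltxx.
case: (odd d) => -[-> -> hx hy].
  have hsum : x + n * y < 0 by apply: ltr_nwDl hx _; rewrite ltW // pmulr_rlt0.
  have -> : a * (s * x) + n * (s * a * y) = s * a * (x + n * y) by ring.
  by rewrite !mulf_neq0 // lt_eqF.
have hsum : 0 < a * a * x + n * y.
  by apply: ltr_wpDl; [exact: mulr_le0 (ltW aa) hx | rewrite pmulr_rgt0].
have -> : a * (s * a * x) + n * (s * y) = s * (a * a * x + n * y) by ring.
by rewrite mulf_neq0 // gt_eqF.
Qed.

End SignPattern.

Section Coprime.
Variable C : numClosedFieldType.
Local Notation zcoef := (@zcoef C).
Implicit Types (a : C).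

Lemma zcoef_sign_pattern G a d : a * a < 0 -> (d < G)%N ->
  sign_pattern a d (zcoef G d).1.[a] (zcoef G d).2.[a].
Proof.
move=> aa; elim: d => [|d IH] dG.
  by exists 1, 0, 1; rewrite /= !hornerE oner_neq0 ltr01.
rewrite zcoefS; have [-> ->] := zcoef_step_horner (2 * (G - d)) (zcoef G d) a.
apply: sign_pattern_step => //; last by apply: IH; lia.
- by rewrite invr_gt0 ltr0n zeta_coef2_gt0 //; lia.
- by rewrite invr_gt0 ltr0n zeta_coef2_gt0 //; lia.
- by rewrite ltr0n zeta_coef1_gt0 //; lia.
Qed.

Lemma zcoef_horner_neq0 G a : a * a < 0 -> (0 < G)%N -> (zcoef G G).1.[a] != 0.
Proof.
move=> aa G0; rewrite zcoef_last //; have [-> _] := zcoef_step_horner 2 (zcoef G G.-1) a.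
rewrite oppr_eq0 mulf_neq0 ?invr_eq0 ?pnatr_eq0 //.
apply: sign_pattern_neq0 aa _ (zcoef_sign_pattern aa _); first by rewrite ltr0n.
by rewrite prednK.
Qed.

Lemma coprimep_Qpoly_zcoef G : (0 < G)%N -> coprimep (Qpoly C G.-1) (zcoef G G).1.
Proof.
move=> G0; apply: Pdiv.ClosedField.root_coprimep => a.
rewrite /root /Qpoly horner_prod prodf_seq_eq0 => /hasP [j].
rewrite mem_index_iota => /andP [j_gt0 _] /=.
rewrite -polyC_natr !hornerE addr_eq0 => /eqP aa.
apply: zcoef_horner_neq0 => //.
by rewrite -expr2 aa oppr_lt0 exprn_gt0 // ltr0n; lia.
Qed.

End Coprime.

Section Consequences.
Variable C : numClosedFieldType.
Local Notation P := {poly {poly C}}.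
Local Notation α := (alpha C).
Local Notation γ := (gamma C).
Local Notation z := (zeta C).
Local Notation zcoef := (@zcoef C).

Lemma unitJ_polyC g (c : C) : c != 0 -> unitJ g c%:P%:P.
Proof.
by move=> c0; exists (c^-1)%:P%:P; rewrite -!polyCM mulVf // !polyC1; exact: congrJ_refl.
Qed.

Lemma zetaZ_lt0 (k : int) : k < 0 -> zetaZ C k = 0.
Proof. by case: k. Qed.

Section HalfIndex.
Variable G : nat.
Hypothesis G_gt0 : (0 < G)%N.
Local Notation g := (2 * G)%N.
Local Notation Z := (z g.-1).

Lemma inJ_alphaZ : inJ g (α * Z).
Proof.
have /Bezout_eq1_coprimepP [[u v] /= uv] := coprimep_Qpoly_zcoef C G_gt0.
have eα : α = (u * ('X * Qpoly C G.-1) + v * ('X * (zcoef G G).1))^:P.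
  by rewrite mulrCA [v * _]mulrCA -mulrDr uv mulr1 map_polyC_X.
have -> : α * Z = u^:P * (('X * Qpoly C G.-1)^:P * Z) + v^:P * (α * ((zcoef G G).1^:P * Z)).
  by rewrite {1}eα !(rmorphD, rmorphM) /= map_polyC_X; ring.
by apply: inJD; apply: inJMl; [exact: inJ_XQpolyZ | exact: inJ_alpha_zcoefZ].
Qed.

Lemma inJ_root0Z (q : {poly C}) : root q 0 -> inJ g (q^:P * Z).
Proof.
move=> /factor_theorem [q' ->]; rewrite polyC0 subr0 rmorphM /= map_polyC_X -mulrA.
by apply: inJMl; exact: inJ_alphaZ.
Qed.

Lemma inJ_alpha_gamma_zeta d e : (d + e.+1)%N = G -> inJ g (α * (γ ^+ d * z (2 * e).+1)).
Proof. by case/(descent C G_gt0) => _ hB _; exact: inJ_mul_congr inJ_alphaZ hB. Qed.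

Lemma inJ_gamma_zeta_odd d e : (d + e.+1)%N = G -> odd d -> inJ g (γ ^+ d * z (2 * e).+1).
Proof.
case/(descent C G_gt0) => _ /congrJE hB _ od.
have B0 : root (zcoef G d).2 0 by have := zcoef_horner0 C G d; rewrite od => /eqP.
by rewrite -(subrK ((zcoef G d).2^:P * Z) (γ ^+ d * _)); apply: inJD => //; exact: inJ_root0Z.
Qed.

Lemma inJ_gamma_zeta_rel d e : (d + e.+1)%N = G ->
  inJ g ((zeta_coef1 (2 * e).+2)%:R * (γ ^+ d * z (2 * e).+1)
         + (zeta_coef2 (2 * e).+2)%:R * (γ ^+ d.+1 * z (2 * e))).
Proof.
case/(descent C G_gt0) => hA _ h3.
have -> : (zeta_coef1 (2 * e).+2)%:R * (γ ^+ d * z (2 * e).+1)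
          + (zeta_coef2 (2 * e).+2)%:R * (γ ^+ d.+1 * z (2 * e))
        = γ ^+ d * z (2 * e).+3 - α * (γ ^+ d * z (2 * e).+2).
  by rewrite (@zetaS_even _ (2 * e).+2) /= ?oddM // exprS; ring.
by apply: inJB => //; exact: inJ_mul_congr inJ_alphaZ hA.
Qed.

End HalfIndex.

Lemma inJ_alpha_gamma_zetaZ G d :
  inJ (2 * G) (α * γ ^+ d * zetaZ C ((2 * G)%N%:Z - (2 * d)%:Z - 1)).
Proof.
case: (ltnP d G) => [dG | Gd]; last first.
  by rewrite zetaZ_lt0 ?mulr0; [exact: congrJ_refl | lia].
have [e hde] : exists e, (d + e.+1)%N = G by exists (G - d.+1)%N; lia.
rewrite (_ : (2 * G)%N%:Z - (2 * d)%:Z - 1 = (2 * e).+1); last by lia.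
by rewrite -mulrA; apply: inJ_alpha_gamma_zeta hde; lia.
Qed.

Lemma inJ_gamma_zetaZ_odd G d : odd d ->
  inJ (2 * G) (γ ^+ d * zetaZ C ((2 * G)%N%:Z - (2 * d)%:Z - 1)).
Proof.
move=> od; case: (ltnP d G) => [dG | Gd]; last first.
  by rewrite zetaZ_lt0 ?mulr0; [exact: congrJ_refl | lia].
have [e hde] : exists e, (d + e.+1)%N = G by exists (G - d.+1)%N; lia.
rewrite (_ : (2 * G)%N%:Z - (2 * d)%:Z - 1 = (2 * e).+1); last by lia.
by apply: inJ_gamma_zeta_odd hde od; lia.
Qed.

Lemma gamma_zetaZ_shift G d : exists2 c : C, c != 0 &
  congrJ (2 * G) (c%:P%:P * γ ^+ d * zetaZ C ((2 * G)%N%:Z - (2 * d)%:Z - 1))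
                 (γ ^+ d.+1 * zetaZ C ((2 * G)%N%:Z - (2 * d)%:Z - 2)).
Proof.
case: (ltnP d G) => [dG | Gd]; last first.
  by exists 1; rewrite ?oner_neq0 // !zetaZ_lt0 ?mulr0; [exact: congrJ_refl | lia | lia].
have [e hde] : exists e, (d + e.+1)%N = G by exists (G - d.+1)%N; lia.
rewrite (_ : (2 * G)%N%:Z - (2 * d)%:Z - 1 = (2 * e).+1); last by lia.
rewrite (_ : (2 * G)%N%:Z - (2 * d)%:Z - 2 = (2 * e)%N); last by lia.
set c1 := zeta_coef1 (2 * e).+2; set c2 := zeta_coef2 (2 * e).+2.
have c2_neq0 : c2 != 0%N by rewrite -lt0n zeta_coef2_gt0.
exists (- (c1%:R / c2%:R)).
  by rewrite oppr_eq0 mulf_neq0 ?invr_eq0 ?pnatr_eq0 // -lt0n zeta_coef1_gt0.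
apply/congrJE; apply: (inJ_natrMl c2_neq0).
have ec : c2%:R * (- (c1%:R / c2%:R))%:P%:P = - c1%:R :> P.
  rewrite -!polyC_natr -!polyCM mulrN mulrCA mulfV ?pnatr_eq0 // mulr1.
  by rewrite !polyCN.
have -> : c2%:R * ((- (c1%:R / c2%:R))%:P%:P * γ ^+ d * z (2 * e).+1 - γ ^+ d.+1 * z (2 * e))
        = - (c1%:R * (γ ^+ d * z (2 * e).+1) + c2%:R * (γ ^+ d.+1 * z (2 * e))).
  by rewrite mulrBr !mulrA ec; ring.
by apply: inJN; apply: inJ_gamma_zeta_rel hde; lia.
Qed.

End Consequences.

Theorem lemma5p9 (R : realType) (g i : nat) : ~~ odd g ->
  (exists w : {poly {poly R[i]}},
      unitJ g w /\
      congrJ g (w * gamma _ ^+ i * zetaZ _ (g%:Z - (2 * i)%:Z - 1))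
               (gamma _ ^+ i.+1 * zetaZ _ (g%:Z - (2 * i)%:Z - 2))) /\
  (exists x : {poly {poly R[i]}},
      unitJ g x /\
      (if ~~ odd i then
         congrJ g (alpha _ * x * gamma _ ^+ i * zetaZ _ (g%:Z - (2 * i)%:Z - 1))
                  (gamma _ ^+ i.+1 * zetaZ _ (g%:Z - (2 * i)%:Z - 3))
       else
         congrJ g (x * gamma _ ^+ i * zetaZ _ (g%:Z - (2 * i)%:Z - 1))
                  (alpha _ * gamma _ ^+ i.+1 * zetaZ _ (g%:Z - (2 * i)%:Z - 3)))).
Proof.
move=> g_even; have [G ->] : exists G, g = (2 * G)%N.
  by exists g./2; rewrite -[g in g = _]odd_double_half (negbTE g_even) add0n -mul2n.
split.
  have [c c0 shift] := gamma_zetaZ_shift R[i] G i.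
  by exists c%:P%:P; split; [exact: unitJ_polyC | exact: shift].
exists 1%:P%:P; split; first exact: unitJ_polyC (oner_neq0 _).
have idx : (2 * G)%N%:Z - (2 * i)%:Z - 3 = (2 * G)%N%:Z - (2 * i.+1)%:Z - 1 by lia.
rewrite !polyC1 mulr1 mul1r idx; case: ifP => i_even; apply/congrJE; apply: inJB.
- exact: inJ_alpha_gamma_zetaZ.
- by apply: inJ_gamma_zetaZ_odd; rewrite /= i_even.
- by apply: inJ_gamma_zetaZ_odd; exact: negbFE.
- exact: inJ_alpha_gamma_zetaZ.
Qed.
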